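(* Let $H$, $L$ be as in the context with $L\mid Z$, let $\omega_{LB}=\lceil\omega(H)/L\rceil$, and let $\mathcal T_0=\{x\in[MZ): x\equiv 0\pmod L\}$ (equivalently $\mathcal T_0=\bigcup_{m\in[M)}\{mZ+((rL)\bmod Z):r\in\mathbb Z\}$). Then $(1,\mathcal T_0)$ is an optimal solution with $\omega(H_{\mathcal T_0})=\omega_{LB}$ if and only if $|\{x\in\mathcal N(v_j): x\equiv 0\pmod L\}|\le\omega_{LB}$ for all $j\in[NZ)$, with equality for some $j$.
   Context: Notation: $[n)=\{0,1,\dots,n-1\}$. Let $M,N,Z$ be positive integers and let $H$ be a binary $MZ\times NZ$ matrix made of $M\times N$ blocks, each a $Z\times Z$ circulant; assume $H$ has no zero row and no two identical rows. For $j\in[NZ)$, $\mathcal N(v_j)=\{i\in[MZ): H[i][j]=1\}$ (the rows with a $1$ in column $j$). For $\mathcal A\subseteq[MZ)$, $H_{\mathcal A}$ is the submatrix of rows indexed by $\mathcal A$; $\omega(A)$ is the maximum Hamming weight of a column of $A$. For $i\in[MZ)$ and integer $s$, $\pi^s(i)=Z\lfloor i/Z\rfloor+((i+s)\bmod Z)$ and $\pi^s(\mathcal T)=\{\pi^s(x):x\in\mathcal T\}$. Fix an integer $L>1$. A pair $(S,\mathcal T_0)$ ($S$ a positive integer, $\mathcal T_0\subseteq[MZ)$) is a feasible solution if, with $\mathcal T_l=\pi^{lS}(\mathcal T_0)$ for $l\in[L)$, the sets $\mathcal T_0,\dots,\mathcal T_{L-1}$ are pairwise disjoint with union $[MZ)$.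 An optimal solution is a feasible solution minimizing $\omega(H_{\mathcal T_0})$ over all feasible solutions. *)

From mathcomp Require Import all_boot all_order all_algebra.
Set Implicit Arguments. Unset Strict Implicit. Unset Printing Implicit Defensive.

(* Cyclic shift inside Z-blocks: pi^s(i) = Z*floor(i/Z) + ((i+s) mod Z),
   on indices in [n) (n = M*Z or N*Z).  The fallback of insubd is never used
   when Z > 0 and Z %| n. *)
Definition blk_shift (n Z s : nat) (i : 'I_n) : 'I_n :=
  insubd i (Z * (i %/ Z) + (i + s) %% Z).

Definition block_circulant (M N Z : nat) (H : 'M[bool]_(M * Z, N * Z)) :=
  forall i j, H i j = H (blk_shift Z 1 i) (blk_shift Z 1 j).

Definition omega_sub (m n : nat) (H : 'M[bool]_(m, n)) (A : {set 'I_m}) : nat :=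
  \max_(j < n) #|[set i in A | H i j]|.

Definition omega (m n : nat) (H : 'M[bool]_(m, n)) : nat := omega_sub H setT.

Definition Tl (m Z S l : nat) (T0 : {set 'I_m}) : {set 'I_m} :=
  blk_shift Z (l * S) @: T0.

Definition feasible (m Z L S : nat) (T0 : {set 'I_m}) : Prop :=
  0 < S /\
  (forall l1 l2, l1 < L -> l2 < L -> l1 != l2 ->
      [disjoint Tl Z S l1 T0 & Tl Z S l2 T0]) /\
  \bigcup_(l < L) Tl Z S l T0 = setT.

Definition optimal (m n Z L : nat) (H : 'M[bool]_(m, n)) S (T0 : {set 'I_m}) : Prop :=
  feasible Z L S T0 /\
  forall S' (T' : {set 'I_m}), feasible Z L S' T' -> omega_sub H T0 <= omega_sub H T'.

Definition ceil_div (a L : nat) : nat := (a + L.-1) %/ L.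

From mathcomp Require Import all_boot all_order all_algebra.
From mathcomp Require Import zify.
Set Implicit Arguments. Unset Strict Implicit.

(* The block shifts pi^s commute with the circulant structure, so the column
   weights of a shifted row set pi^s(T) are those of T on shifted columns and
   omega(H_{pi^s(T)}) <= omega(H_T).  For a feasible (S, T) the L shifts of T
   cover all rows, hence omega(H) <= L * omega(H_T), i.e. ceil(omega(H)/L) is
   a lower bound for every feasible solution.  When L divides Z, the shift by l
   maps the multiples of L onto the residue class l mod L, so (1, T0) is
   feasible; it is then optimal with value ceil(omega(H)/L) exactly when its
   maximal column weight takes that value. *)

Definition shift_opp (Z s : nat) : nat := Z - s %% Z.

Lemma dvdn_add_shift_opp Z s : 0 < Z -> Z %| s + shift_opp Z s.
Proof.
move=> Z_gt0; apply/dvdnP; exists (s %/ Z).+1; rewrite /shift_opp.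
have := ltn_pmod s Z_gt0; have := divn_eq s Z; lia.
Qed.

Section BlockShift.
Variables (n Z : nat).
Hypotheses (Z_gt0 : 0 < Z) (Z_dvd_n : Z %| n).

Lemma blk_shift_val s (i : 'I_n) :
  val (blk_shift Z s i) = Z * (i %/ Z) + (i + s) %% Z.
Proof.
rewrite /blk_shift val_insubd ifT //; case/dvdnP: Z_dvd_n => k n_eq.
have lt_q : i %/ Z < k by rewrite ltn_divLR // -n_eq.
have lt_r : (i + s) %% Z < Z by rewrite ltn_mod.
have : (i %/ Z).+1 * Z <= k * Z by rewrite leq_mul2r lt_q orbT.
rewrite mulSn => le_qk; apply: leq_trans (_ : k * Z <= n); first lia.
by rewrite n_eq.
Qed.

Lemma blk_shiftD s t (i : 'I_n) :
  blk_shift Z s (blk_shift Z t i) = blk_shift Z (t + s) i.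
Proof.
apply: val_inj; rewrite !blk_shift_val.
have lt_r : (i + t) %% Z < Z by rewrite ltn_mod.
rewrite [Z * (i %/ Z)]mulnC divnMDl // (divn_small lt_r) addn0 mulnC.
by rewrite -addnA modnMDl modnDml addnA.
Qed.

Lemma blk_shift_dvd s (i : 'I_n) : Z %| s -> blk_shift Z s i = i.
Proof.
case/dvdnP=> k ->; apply: val_inj.
by rewrite blk_shift_val [i + _]addnC modnMDl mulnC -divn_eq.
Qed.

Lemma blk_shiftK s : cancel (blk_shift (n := n) Z s) (blk_shift Z (shift_opp Z s)).
Proof. by move=> i; rewrite blk_shiftD blk_shift_dvd ?dvdn_add_shift_opp. Qed.

Lemma blk_shiftVK s : cancel (blk_shift (n := n) Z (shift_opp Z s)) (blk_shift Z s).
Proof.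
by move=> i; rewrite blk_shiftD addnC blk_shift_dvd ?dvdn_add_shift_opp.
Qed.

Lemma blk_shift_inj s : injective (blk_shift (n := n) Z s).
Proof. exact: can_inj (blk_shiftK s). Qed.

Lemma blk_shift_modn L s (i : 'I_n) :
  L %| Z -> val (blk_shift Z s i) = i + s %[mod L].
Proof.
move=> L_dvd_Z; rewrite blk_shift_val -modnDm.
have /eqP -> : Z * (i %/ Z) %% L == 0 by rewrite -/(dvdn _ _) dvdn_mulr.
by rewrite add0n modn_mod (modn_dvdm _ L_dvd_Z).
Qed.

End BlockShift.

Definition col_weight (m n : nat) (H : 'M[bool]_(m, n)) (A : {set 'I_m}) j :=
  #|[set i in A | H i j]|.

Section ColumnWeights.
Variables (m n : nat) (H : 'M[bool]_(m, n)).

Lemma col_weight_le_omega_sub A j : col_weight H A j <= omega_sub H A.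
Proof. exact: (leq_bigmax (F := col_weight H A)). Qed.

Lemma omega_subU A B : omega_sub H (A :|: B) <= omega_sub H A + omega_sub H B.
Proof.
apply/bigmax_leqP => j _.
have -> : [set i in A :|: B | H i j] = [set i in A | H i j] :|: [set i in B | H i j].
  by apply/setP => i; rewrite !inE andb_orl.
apply: leq_trans (leq_card_setU _ _).1 _.
by apply: leq_add; apply: col_weight_le_omega_sub.
Qed.

Lemma omega_sub_bigcup (I : finType) (P : pred I) (A : I -> {set 'I_m}) :
  omega_sub H (\bigcup_(k | P k) A k) <= \sum_(k | P k) omega_sub H (A k).
Proof.
apply: (big_ind2 (fun B w => omega_sub H B <= w)) => //.
- apply/bigmax_leqP => j _; rewrite leqn0 cards_eq0.
  by apply/eqP/setP => i; rewrite !inE.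
- move=> B u C w le_B le_C; apply: leq_trans (omega_subU B C) _.
  exact: leq_add.
Qed.

Lemma omega_sub_eq_iff A w : 0 < n ->
  omega_sub H A = w <->
  (forall j, col_weight H A j <= w) /\ exists j, col_weight H A j = w.
Proof.
move=> n_gt0; split.
- move=> <-; split; first exact: col_weight_le_omega_sub.
  have [j max_j] : {j | omega_sub H A = col_weight H A j}.
    by apply: eq_bigmax; rewrite card_ord.
  by exists j.
- case=> le_w [j eq_w]; apply/eqP; rewrite eqn_leq -{2}eq_w.
  by rewrite col_weight_le_omega_sub andbT; apply/bigmax_leqP => k _; apply: le_w.
Qed.

End ColumnWeights.

Section Circulant.
Variables (M N Z : nat) (H : 'M[bool]_(M * Z, N * Z)).
Hypotheses (Z_gt0 : 0 < Z) (circH : block_circulant H).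

Let Z_dvd_MZ : Z %| M * Z. Proof. exact: dvdn_mull. Qed.
Let Z_dvd_NZ : Z %| N * Z. Proof. exact: dvdn_mull. Qed.

Lemma block_circulant_shift k i j :
  H (blk_shift Z k i) (blk_shift Z k j) = H i j.
Proof.
elim: k => [|k IHk]; first by rewrite !blk_shift_dvd ?dvdn0.
by rewrite -addn1 -!blk_shiftD // -circH.
Qed.

Lemma col_weight_shift s (A : {set 'I_(M * Z)}) j :
  col_weight H (blk_shift Z s @: A) j =
  col_weight H A (blk_shift Z (shift_opp Z s) j).
Proof.
rewrite /col_weight.
have -> : [set i in blk_shift Z s @: A | H i j] =
          blk_shift Z s @: [set i in A | H (blk_shift Z s i) j].
  apply/setP => x; rewrite inE; apply/andP/imsetP.
  - by case=> /imsetP[a A_a ->] Hx; exists a; rewrite // inE A_a.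
  - by case=> a; rewrite inE => /andP[A_a Ha] ->; rewrite imset_f.
rewrite card_imset; last exact: blk_shift_inj.
apply: eq_card => i; rewrite !inE.
by rewrite -(block_circulant_shift (shift_opp Z s)) blk_shiftK.
Qed.

Lemma omega_sub_shift s (A : {set 'I_(M * Z)}) :
  omega_sub H (blk_shift Z s @: A) <= omega_sub H A.
Proof.
apply/bigmax_leqP => j _; rewrite -/(col_weight H _ j) col_weight_shift.
exact: col_weight_le_omega_sub.
Qed.

Lemma omega_le_feasible L S T : feasible Z L S T -> omega H <= L * omega_sub H T.
Proof.
case=> _ [_ cover_T]; rewrite /omega -cover_T.
apply: leq_trans (omega_sub_bigcup _ _ _) _.
apply: (@leq_trans (\sum_(l < L) omega_sub H T)).
  by apply: leq_sum => l _; apply: omega_sub_shift.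
by rewrite sum_nat_const card_ord.
Qed.

End Circulant.

Lemma leq_ceil_div a L w : 0 < L -> a <= L * w -> ceil_div a L <= w.
Proof. by move=> L_gt0 le_a; rewrite /ceil_div -ltnS ltn_divLR //; lia. Qed.

Section ResidueClass.
Variables (M Z L : nat).
Hypotheses (Z_gt0 : 0 < Z) (L_dvd_Z : L %| Z).

Let Z_dvd_MZ : Z %| M * Z. Proof. exact: dvdn_mull. Qed.

Lemma Tl_residue_class l :
  Tl Z 1 l [set x : 'I_(M * Z) | L %| x] = [set x : 'I_(M * Z) | x %% L == l %% L].
Proof.
rewrite /Tl muln1; apply/setP => x; rewrite inE; apply/imsetP/eqP.
- case=> a; rewrite inE => /eqP L_dvd_a ->.
  by rewrite blk_shift_modn // -modnDml L_dvd_a.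
- move=> x_l; exists (blk_shift Z (shift_opp Z l) x); last by rewrite blk_shiftVK.
  have L_dvd_l : L %| l + shift_opp Z l.
    exact: dvdn_trans L_dvd_Z (dvdn_add_shift_opp _ Z_gt0).
  by rewrite inE /dvdn blk_shift_modn // -modnDml x_l modnDml.
Qed.

Lemma feasible_residue_class :
  1 < L -> feasible Z L 1 [set x : 'I_(M * Z) | L %| x].
Proof.
move=> L_gt1; have L_gt0 : 0 < L by apply: ltnW.
split=> //; split=> [l1 l2 lt_l1 lt_l2 ne_l|].
- rewrite !Tl_residue_class !modn_small // -setI_eq0.
  apply/eqP/setP => x; rewrite !inE.
  by apply/negbTE; apply: contra ne_l => /andP[/eqP <- /eqP <-].
- apply/setP => x; rewrite inE; apply/bigcupP.
  exists (Ordinal (ltn_pmod x L_gt0)) => //.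
  by rewrite Tl_residue_class inE modn_mod.
Qed.

End ResidueClass.

Theorem lemma3 (M N Z L : nat) (H : 'M[bool]_(M * Z, N * Z)) :
  0 < M -> 0 < N -> 0 < Z -> 1 < L -> L %| Z ->
  block_circulant H ->
  (forall i : 'I_(M * Z), exists j : 'I_(N * Z), H i j) ->
  (forall i i' : 'I_(M * Z), (forall j, H i j = H i' j) -> i = i') ->
  let wLB := ceil_div (omega H) L in
  let T0 := [set x : 'I_(M * Z) | L %| x] in
  (optimal Z L H 1 T0 /\ omega_sub H T0 = wLB) <->
  ((forall j : 'I_(N * Z), #|[set x : 'I_(M * Z) | H x j && (L %| x)]| <= wLB) /\
   exists j : 'I_(N * Z), #|[set x : 'I_(M * Z) | H x j && (L %| x)]| = wLB).
Proof.
move=> _ N_gt0 Z_gt0 L_gt1 L_dvd_Z circH _ _ wLB T0.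
have L_gt0 : 0 < L by apply: ltnW.
have feasible_T0 : feasible Z L 1 T0 by apply: feasible_residue_class.
have lower_bound S T : feasible Z L S T -> wLB <= omega_sub H T.
  by move=> feasible_T; apply/leq_ceil_div/(omega_le_feasible Z_gt0 circH feasible_T).
have col_weight_T0 j : col_weight H T0 j = #|[set x | H x j && (L %| x)]|.
  by apply: eq_card => x; rewrite !inE andbC.
have NZ_gt0 : 0 < N * Z by rewrite muln_gt0 N_gt0.
have -> : optimal Z L H 1 T0 /\ omega_sub H T0 = wLB <-> omega_sub H T0 = wLB.
  split=> [[] // | eq_wLB]; do 2!split=> //.
  by move=> S T feasible_T; rewrite eq_wLB; apply: lower_bound feasible_T.
rewrite omega_sub_eq_iff //.
split=> -[le_wLB [j eq_wLB]]; split; try exists j.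
- by move=> k; rewrite -col_weight_T0.
- by rewrite -col_weight_T0.
- by move=> k; rewrite col_weight_T0.
- by rewrite col_weight_T0.
Qed.
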